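(* Let $\psi\in\Psi$ satisfy $\lim_{t\to\infty}\frac{\psi(t\psi(t))}{\psi(t)}=1$. Let $x\in M_\psi$ and $c>\|x\|_{M_\psi}$. Then $n_x(1/t)\le ct\psi(t)$ for all sufficiently large $t$.
   Context: $\Psi$ is the class of concave increasing functions $\psi$ on $[0,\infty)$ with $\psi(\infty)=\infty$, $\psi(t)=O(t)$ as $t\to0$, $\psi(t)=o(t)$ as $t\to\infty$. For bounded measurable $x$ on $(0,\infty)$, $n_x(\lambda)=m(\{s:|x(s)|>\lambda\})$ and $x^*$ is the nonincreasing right-continuous rearrangement of $|x|$. $M_\psi$ is the space of bounded measurable $x$ with $\|x\|_{M_\psi}=\sup_{t>0}\frac1{\psi(t)}\int_0^tx^*(s)ds<\infty$. *)

From HB Require Import structures.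
From mathcomp Require Import all_boot all_order all_algebra.
From mathcomp Require Import all_classical all_reals all_analysis.
Set Implicit Arguments. Unset Strict Implicit. Unset Printing Implicit Defensive.
Import Order.TTheory GRing.Theory Num.Theory.
Import numFieldNormedType.Exports.
Local Open Scope classical_set_scope.
Local Open Scope ring_scope.

Section Defs.
Variable R : realType.

Definition in_Psi (psi : R -> R) : Prop :=
  [/\ (forall a b l : R, 0 <= a -> 0 <= b -> 0 <= l <= 1 ->
         (1 - l) * psi a + l * psi b <= psi ((1 - l) * a + l * b)),
      (forall a b : R, 0 <= a -> a <= b -> psi a <= psi b),
      psi t @[t --> +oo] --> +oo,
      (exists C : R, \forall t \near 0^'+, `|psi t| <= C * t) &
      (psi t / t @[t --> +oo] --> 0)].

Definition bdd_meas (x : R -> R) : Prop :=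
  measurable_fun (`]0%R, +oo[ : set R) x /\
  exists M : R, forall s : R, 0 < s -> `|x s| <= M.

Definition distr_fun (x : R -> R) (l : R) : \bar R :=
  (@lebesgue_measure R) ([set s | 0 < s /\ l < `|x s|]).

(* nonincreasing right-continuous rearrangement of |x| *)
Definition rearr (x : R -> R) (t : R) : R :=
  inf [set l : R | 0 <= l /\ (distr_fun x l <= t%:E)%E].

Definition marc_norm (psi : R -> R) (x : R -> R) : \bar R :=
  ereal_sup [set (((psi t)^-1)%:E *
                 \int[@lebesgue_measure R]_(s in `]0%R, t]) (rearr x s)%:E)%E
            | t in (`]0%R, +oo[ : set R)].

End Defs.

From HB Require Import structures.
From mathcomp Require Import all_boot all_order all_algebra.
From mathcomp Require Import all_classical all_reals all_analysis.
From mathcomp Require Import ring lra.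
Import Order.TTheory GRing.Theory Num.Theory.
Import numFieldNormedType.Exports.
Local Open Scope classical_set_scope.
Local Open Scope ring_scope.

(** If [n_x(1/t) > v := c t psi(t)], then [x^* >= 1/t] on [(0, v]], so the
   Marcinkiewicz norm [r < c] gives [c psi(t) = v / t <= r psi(v)].  With
   [s := t psi(t)] and [c <= psi(s)], monotonicity gives
   [psi(v) <= psi(s psi(s)) = rho(t) rho(s) psi(t)] where
   [rho(u) := psi(u psi(u)) / psi(u) -> 1]; since [s -> +oo] as well,
   [r rho(t) rho(s) < c] eventually, a contradiction. *)

Section rearrangement.
Context {R : realType} {x : R -> R}.
Hypothesis mx : measurable_fun (`]0%R, +oo[ : set R) x.

Lemma measurable_distr_set (l : R) :
  measurable [set s : R | 0 < s /\ l < `|x s|].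
Proof.
have mnx : measurable_fun (`]0%R, +oo[ : set R) (Num.Def.normr \o x).
  exact: measurableT_comp (@measurable_realfun.normr_measurable R setT) mx.
have := mnx (measurable_itv `]0%R, +oo[) _ (measurable_itv `]l, +oo[).
congr measurable; apply/seteqP; split => s /=; rewrite !in_itv /= !andbT.
- by case=> ->.
- by case.
Qed.

Lemma le_distr_fun (l l' : R) : l <= l' -> (distr_fun x l' <= distr_fun x l)%E.
Proof.
move=> ll'; apply: le_measure; rewrite ?inE; try exact: measurable_distr_set.
by move=> s /= [s0 ls]; split => //; apply: le_lt_trans ls.
Qed.

Lemma rearr_ge0 (s : R) : 0 <= rearr x s.
Proof.
rewrite /rearr; set S := (X in inf X).
have [->|/set0P S0] := eqVneq S set0; first by rewrite inf0.
by apply: lb_le_inf S0 _ => l [].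
Qed.

Context {M : R}.
Hypothesis xM : forall s, 0 < s -> `|x s| <= M.

Lemma distr_fun_max0 : distr_fun x (Num.max M 0) = 0%E.
Proof.
rewrite /distr_fun (_ : [set s | _] = set0) ?measure0 //.
apply/seteqP; split => s //= [s0]; rewrite gt_max => /andP[Ms _].
by have := lt_le_trans Ms (xM s s0); rewrite ltxx.
Qed.

Lemma rearr_set_neq0 (s : R) : 0 <= s ->
  [set l : R | 0 <= l /\ (distr_fun x l <= s%:E)%E] !=set0.
Proof.
move=> s0; exists (Num.max M 0); split; first by rewrite le_max lexx orbT.
by rewrite distr_fun_max0 lee_fin.
Qed.

Lemma le_rearr (s s' : R) : 0 <= s -> s <= s' -> rearr x s' <= rearr x s.
Proof.
move=> s0 ss'; rewrite /rearr; apply: lb_le_inf (rearr_set_neq0 _ s0) _ => l [l0 hl].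
apply: ge_inf; first by exists 0 => z [].
by split => //; apply: le_trans hl _; rewrite lee_fin.
Qed.

Lemma rearr_ge_level (l s : R) : 0 <= s ->
  (s%:E < distr_fun x l)%E -> l <= rearr x s.
Proof.
move=> s0 sl; rewrite /rearr; apply: lb_le_inf (rearr_set_neq0 _ s0) _ => l' [_ hl'].
rewrite leNgt; apply/negP => /ltW/le_distr_fun l'l.
by have := lt_le_trans sl (le_trans l'l hl'); rewrite ltxx.
Qed.

Lemma measurable_rearr (D : set R) : measurable D ->
  (forall s, D s -> 0 <= s) -> measurable_fun D (rearr x).
Proof.
move=> mD D0; apply: (@eq_measurable_fun _ _ _ _ _ (rearr x \o Num.max 0)).
  by move=> s /set_mem /D0 s0 /=; rewrite max_r.
apply: measurable_realfun.nonincreasing_measurable => // s s' ss' /=.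
by apply: le_rearr; [rewrite le_max lexx | exact: le_max2].
Qed.

Lemma rearr_integral_ge (l v : R) : 0 <= l -> 0 < v ->
  (v%:E < distr_fun x l)%E ->
  ((l * v)%:E <= \int[@lebesgue_measure R]_(s in `]0%R, v]) (rearr x s)%:E)%E.
Proof.
move=> l0 v0 vl.
have -> : ((l * v)%:E = \int[@lebesgue_measure R]_(s in `]0%R, v]) (cst l%:E s))%E.
  rewrite integral_cst //= lebesgue_measure_itv /= lte_fin v0.
  by rewrite oppr0 adde0 -EFinM.
apply: ge0_le_integral.
- exact: measurable_itv.
- by move=> s _; rewrite lee_fin.
- exact: measurable_cst.
- apply/measurable_realfun.measurable_EFinP; apply: measurable_rearr => // s.
  by rewrite /= in_itv /= => /andP[/ltW].
- move=> s; rewrite /= in_itv /= => /andP[s0 sv]; rewrite lee_fin.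
  by apply: rearr_ge_level (ltW s0) _; apply: le_lt_trans vl; rewrite lee_fin.
Qed.

End rearrangement.

Section marcinkiewicz_norm.
Context {R : realType} (psi x : R -> R).

Lemma marc_norm_ge_integral (t : R) : 0 < t ->
  (((psi t)^-1)%:E * \int[@lebesgue_measure R]_(s in `]0%R, t]) (rearr x s)%:E
    <= marc_norm psi x)%E.
Proof. by move=> t0; apply: ereal_sup_ubound; exists t; rewrite //= in_itv /= t0. Qed.

Lemma marc_norm_ge0 (t : R) :
  0 < t -> 0 <= psi t -> (0 <= marc_norm psi x)%E.
Proof.
move=> t0 pt0; apply: le_trans (marc_norm_ge_integral _ t0).
rewrite mule_ge0 ?lee_fin ?invr_ge0 //.
by apply: integral_ge0 => s _; rewrite lee_fin rearr_ge0.
Qed.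

Lemma integral_rearr_le_marc_norm (r t : R) :
  marc_norm psi x = r%:E -> 0 < t -> 0 < psi t ->
  (\int[@lebesgue_measure R]_(s in `]0%R, t]) (rearr x s)%:E <= (r * psi t)%:E)%E.
Proof.
move=> normE t0 pt0; have := marc_norm_ge_integral _ t0.
by rewrite normE lee_pdivrMl // -EFinM mulrC.
Qed.

End marcinkiewicz_norm.

Section psi_growth.
Context {R : realType} (psi : R -> R).

Definition psi_ratio (t : R) : R := psi (t * psi t) / psi t.

Hypothesis psi_nondecreasing : forall a b : R, 0 <= a -> a <= b -> psi a <= psi b.
Hypothesis psi_cvgy : psi t @[t --> +oo] --> +oo.

Lemma mul_psi_cvgy : t * psi t @[t --> +oo] --> +oo.
Proof.
apply/cvgryPge => A; near=> t.
have : A <= t by near: t; exact: nbhs_pinfty_ge (num_real _).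
have : 0 <= t by near: t; exact: nbhs_pinfty_ge (num_real _).
have : 1 <= psi t by near: t; exact: (cvgry_ge psi_cvgy 1).
nra.
Unshelve. all: by end_near. Qed.

Lemma psi_ratio_comp_cvg : psi_ratio t @[t --> +oo] --> (1 : R) ->
  psi_ratio t * psi_ratio (t * psi t) @[t --> +oo] --> (1 : R).
Proof.
move=> ratio_cvg; rewrite -[X in _ --> X]mulr1.
exact: cvgM ratio_cvg (cvg_comp _ _ mul_psi_cvgy ratio_cvg).
Qed.

Lemma psi_le_scaled (c : R) : 0 < c -> \forall t \near +oo,
  psi t <= psi (c * t * psi t).
Proof.
move=> c0; near=> t.
have t0 : 0 <= t by near: t; exact: nbhs_pinfty_ge (num_real _).
have cpt : c^-1 <= psi t by near: t; exact: (cvgry_ge psi_cvgy c^-1).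
apply: psi_nondecreasing; rewrite // -mulrA mulrCA ler_peMr //.
by rewrite -(mulfV (lt0r_neq0 c0)) ler_wpM2l // ltW.
Unshelve. all: by end_near. Qed.

Lemma psi_scaled_le (c : R) : 0 <= c -> \forall t \near +oo,
  psi (c * t * psi t) <= psi_ratio t * psi_ratio (t * psi t) * psi t.
Proof.
move=> c0; near=> t.
have t0 : 0 <= t by near: t; exact: nbhs_pinfty_ge (num_real _).
have pt1 : 1 <= psi t by near: t; exact: (cvgry_ge psi_cvgy 1).
have cpt : c <= psi t by near: t; exact: (cvgry_ge psi_cvgy c).
set s := t * psi t.
have ts : t <= s by rewrite /s; nra.
have pts : psi t <= psi s by exact: psi_nondecreasing.
have -> : psi_ratio t * psi_ratio s * psi t = psi (s * psi s).
  by rewrite /psi_ratio -/s; field; apply/andP; split; apply/lt0r_neq0; lra.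
have s0 : 0 <= s by lra.
rewrite -mulrA -/s; apply: psi_nondecreasing; first exact: mulr_ge0.
by rewrite mulrC ler_wpM2l //; lra.
Unshelve. all: by end_near. Qed.

Lemma psi_scaled_lt (r c : R) : 0 <= r < c ->
  psi_ratio t @[t --> +oo] --> (1 : R) ->
  \forall t \near +oo, r * psi (c * t * psi t) < c * psi t.
Proof.
move=> /andP[r0 rc] ratio_cvg.
have lim : r * (psi_ratio t * psi_ratio (t * psi t)) @[t --> +oo] --> r * 1.
  exact: cvgM (cvg_cst r) (psi_ratio_comp_cvg ratio_cvg).
near=> t.
have pt0 : 0 < psi t by near: t; exact: (cvgry_gt psi_cvgy 0).
have psi_le : psi (c * t * psi t) <= psi_ratio t * psi_ratio (t * psi t) * psi t.
  by near: t; apply: psi_scaled_le; exact: le_trans r0 (ltW rc).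
apply: le_lt_trans (ler_wpM2l r0 psi_le) _; rewrite mulrA ltr_pM2r //.
by near: t; apply: (cvgr_lt _ lim); rewrite mulr1.
Unshelve. all: by end_near. Qed.

End psi_growth.

Theorem lemma2p2 (R : realType) (psi : R -> R) (x : R -> R) (c : R) :
  in_Psi psi ->
  (psi (t * psi t) / psi t @[t --> +oo] --> (1 : R)) ->
  bdd_meas x ->
  (marc_norm psi x < +oo)%E ->
  (marc_norm psi x < c%:E)%E ->
  exists T : R, forall t : R, T < t ->
    (distr_fun x (t^-1) <= (c * t * psi t)%:E)%E.
Proof.
move=> [_ psi_nd psi_cvgy _ _] ratio_cvg [mx [M xM]] norm_fin norm_lt_c.
have [t1 [t1_gt0 psit1_ge0]] : exists t : R, 0 < t /\ 0 <= psi t.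
  apply: (@filter_ex _ (pinfty_nbhs R)); near=> t; split; near: t.
  - exact: nbhs_pinfty_gt (num_real _).
  - exact: (cvgry_ge psi_cvgy 0).
have norm_ge0 := marc_norm_ge0 psi x _ t1_gt0 psit1_ge0.
have [r normE] : exists r, marc_norm psi x = r%:E.
  by exists (fine (marc_norm psi x)); rewrite fineK // ge0_fin_numE.
have r0 : 0 <= r by rewrite -lee_fin -normE.
have rc : r < c by rewrite -lte_fin -normE.
have c0 : 0 < c by apply: le_lt_trans rc.
have [T [_ HT]] : \forall t \near +oo, [/\ 0 < t, 0 < psi t,
    psi t <= psi (c * t * psi t) & r * psi (c * t * psi t) < c * psi t].
  near=> t; split; near: t.
  - exact: nbhs_pinfty_gt (num_real _).
  - exact: (cvgry_gt psi_cvgy 0).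
  - exact: psi_le_scaled.
  - by apply: psi_scaled_lt; rewrite ?r0.
exists T => t /HT [t0 pt0 psi_le norm_lt].
rewrite leNgt; apply/negP => dist_gt.
have v0 : 0 < c * t * psi t by rewrite !mulr_gt0.
have ti0 : 0 <= t^-1 by rewrite invr_ge0 ltW.
have := le_trans (rearr_integral_ge mx xM _ _ ti0 v0 dist_gt)
  (integral_rearr_le_marc_norm psi x r _ normE v0 (lt_le_trans pt0 psi_le)).
rewrite lee_fin (_ : t^-1 * _ = c * psi t); last by field; exact: lt0r_neq0.
by rewrite leNgt norm_lt.
Unshelve. all: by end_near. Qed.
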